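(* Let $A\in\mathbb{C}^{m\times n}$ have rank $r$, $B\in\mathbb{C}^{m\times n}$ have rank $s$, and $E=B-A$. Then $$\|B^{\dagger}-A^{\dagger}\|_{F}^{2}\leq\min\big\{\beta_{1}+\|B^{\dagger}EA^{\dagger}\|_{F}^{2},\ \beta_{2}+\|A^{\dagger}EB^{\dagger}\|_{F}^{2}\big\},$$ where $$\beta_{1}:=\|A^{\dagger}\|_{2}^{4}\big(\|E\|_{F}^{2}-\|EB^{\dagger}B\|_{F}^{2}\big)+\|B^{\dagger}\|_{2}^{4}\big(\|E\|_{F}^{2}-\|AA^{\dagger}E\|_{F}^{2}\big),$$ $$\beta_{2}:=\|A^{\dagger}\|_{2}^{4}\big(\|E\|_{F}^{2}-\|BB^{\dagger}E\|_{F}^{2}\big)+\|B^{\dagger}\|_{2}^{4}\big(\|E\|_{F}^{2}-\|EA^{\dagger}A\|_{F}^{2}\big).$$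
   Context: $M^{\dagger}$ denotes the Moore–Penrose inverse of $M$, $\|\cdot\|_{2}$ the spectral norm and $\|\cdot\|_{F}$ the Frobenius norm. *)

From HB Require Import structures.
From mathcomp Require Import all_boot all_order all_algebra.
From mathcomp Require Import complex.
From mathcomp Require Import classical_sets reals Rstruct.
Set Implicit Arguments. Unset Strict Implicit. Unset Printing Implicit Defensive.
Import Order.TTheory GRing.Theory Num.Theory.
Local Open Scope ring_scope.
Local Open Scope classical_set_scope.

Notation Rr := Rdefinitions.R.
Notation Cc := (Rdefinitions.R)[i].

Definition cabs (z : Cc) : Rr := ComplexField.Normc.normc z.

Definition ctrmx m n (A : 'M[Cc]_(m, n)) : 'M[Cc]_(n, m) := (map_mx Num.conj A)^T.

(* X is the Moore–Penrose inverse of A (the four Penrose equations);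
   it exists and is unique, so quantifying over it denotes A^dagger. *)
Definition is_pinv m n (A : 'M[Cc]_(m, n)) (X : 'M[Cc]_(n, m)) : Prop :=
  [/\ A *m X *m A = A, X *m A *m X = X,
      ctrmx (A *m X) = A *m X & ctrmx (X *m A) = X *m A].

Definition frob m n (A : 'M[Cc]_(m, n)) : Rr :=
  Num.sqrt (\sum_(i < m) \sum_(j < n) cabs (A i j) ^+ 2).

Definition vnorm n (x : 'cV[Cc]_n) : Rr :=
  Num.sqrt (\sum_(i < n) cabs (x i 0) ^+ 2).

Definition specnorm m n (A : 'M[Cc]_(m, n)) : Rr :=
  sup [set vnorm (A *m x) | x in [set x : 'cV[Cc]_n | vnorm x <= 1]].

(* With the orthogonal projections Q = B^+ B and P = A A^+ (B^+, A^+ the pseudo-inverses)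
   and E = B - A, the Penrose equations split B^+ - A^+ into four blocks:
     Q (B^+ - A^+) P = - B^+ E A^+,
     Q (B^+ - A^+) (I - P) = B^+ (B^+)^* E^* (I - P),
     (I - Q) (B^+ - A^+) P = ((A^+)^* A^+ E (I - Q))^*,
     (I - Q) (B^+ - A^+) (I - P) = 0,
   and Pythagoras for the Frobenius norm adds up their squares.  The two middle blocks
   have the form M M^* Y or M^* M Y, whose squared norm is at most ||M||_2^4 ||Y||_F^2,
   and Pythagoras again gives ||(I - P) E||_F^2 = ||E||_F^2 - ||P E||_F^2 and
   ||E (I - Q)||_F^2 = ||E||_F^2 - ||E Q||_F^2.  This is the first bound; exchanging
   A and B gives the second. *)

From HB Require Import structures.
From mathcomp Require Import all_boot all_order all_algebra.
From mathcomp Require Import complex.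
From mathcomp Require Import classical_sets reals Rstruct.
From mathcomp Require Import ring lra.
Import Order.TTheory GRing.Theory Num.Theory.
Local Open Scope ring_scope.
Set Implicit Arguments. Unset Strict Implicit.

Section ConjugateTranspose.
Variables m n p : nat.

Lemma ctrmxM (X : 'M[Cc]_(m, n)) (Y : 'M[Cc]_(n, p)) :
  ctrmx (X *m Y) = ctrmx Y *m ctrmx X.
Proof. by rewrite /ctrmx map_mxM trmx_mul. Qed.

Lemma ctrmxD (X Y : 'M[Cc]_(m, n)) : ctrmx (X + Y) = ctrmx X + ctrmx Y.
Proof. by rewrite /ctrmx map_mxD linearD. Qed.

Lemma ctrmxB (X Y : 'M[Cc]_(m, n)) : ctrmx (X - Y) = ctrmx X - ctrmx Y.
Proof. by rewrite /ctrmx map_mxB linearB. Qed.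

Lemma ctrmxK (X : 'M[Cc]_(m, n)) : ctrmx (ctrmx X) = X.
Proof. by apply/matrixP => i j; rewrite /ctrmx !mxE conjCK. Qed.

Lemma ctrmx_realZ (a : Rr) (X : 'M[Cc]_(m, n)) :
  ctrmx (a%:C%C *: X) = a%:C%C *: ctrmx X.
Proof.
by apply/matrixP => i j; rewrite /ctrmx !mxE rmorphM; congr (_ * _); exact: conjc_real.
Qed.

End ConjugateTranspose.

Lemma ctrmx1 n : ctrmx (1%:M : 'M[Cc]_n) = 1%:M.
Proof. by rewrite /ctrmx map_mx1 trmx1. Qed.

Lemma frob2_tr m n (X : 'M[Cc]_(m, n)) : (frob X ^+ 2)%:C%C = \tr (X *m ctrmx X).
Proof.
rewrite /frob sqr_sqrtr; last by do 2![apply: sumr_ge0 => ? _]; exact: sqr_ge0.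
rewrite rmorph_sum; apply: eq_bigr => i _.
rewrite rmorph_sum mxE; apply: eq_bigr => j _.
by rewrite rmorphXn /= /ctrmx !mxE -normCK.
Qed.

Lemma frob2_ctrmx m n (X : 'M[Cc]_(m, n)) : frob (ctrmx X) ^+ 2 = frob X ^+ 2.
Proof. by apply: (@complexI Rr); rewrite !frob2_tr ctrmxK mxtrace_mulC. Qed.

Lemma frobN m n (X : 'M[Cc]_(m, n)) : frob (- X) = frob X.
Proof.
rewrite /frob; congr Num.sqrt; apply: eq_bigr => i _; apply: eq_bigr => j _.
by rewrite mxE /cabs normcN.
Qed.

Lemma frob0 m n : frob (0 : 'M[Cc]_(m, n)) = 0.
Proof.
rewrite /frob big1 ?sqrtr0 // => i _; rewrite big1 // => j _.
by rewrite mxE /cabs ComplexField.Normc.normc0 expr0n.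
Qed.

Definition orthoproj n (P : 'M[Cc]_n) : Prop := ctrmx P = P /\ P *m P = P.

Lemma orthoprojC n (P : 'M[Cc]_n) : orthoproj P -> orthoproj (1%:M - P).
Proof.
case=> sP iP; split; first by rewrite ctrmxB ctrmx1 sP.
by rewrite mulmxBl mul1mx mulmxBr mulmx1 iP subrr subr0.
Qed.

Lemma frob2_orthoprojl m n (P : 'M[Cc]_m) (X : 'M[Cc]_(m, n)) : orthoproj P ->
  frob X ^+ 2 = frob (P *m X) ^+ 2 + frob ((1%:M - P) *m X) ^+ 2.
Proof.
move=> oP; have [sP iP] := oP; have [sQ _] := orthoprojC oP.
set Q := 1%:M - P in sQ *.
have cross (U V : 'M_m) : V *m U = 0 -> \tr (U *m X *m (ctrmx X *m V)) = 0.
  by move=> VU; rewrite mulmxA mxtrace_mulC !mulmxA VU !mul0mx mxtrace0.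
have PQ : P *m Q = 0 by rewrite mulmxBr mulmx1 iP subrr.
have QP : Q *m P = 0 by rewrite mulmxBl mul1mx iP subrr.
have splitX : X = P *m X + Q *m X by rewrite -mulmxDl addrC subrK mul1mx.
clearbody Q; apply: (@complexI Rr); rewrite rmorphD /= !frob2_tr {1 2}splitX.
rewrite ctrmxD !ctrmxM sP sQ mulmxDl !mulmxDr !mxtraceD.
by rewrite (cross _ _ QP) (cross _ _ PQ) addr0 add0r !mulmxA.
Qed.

Lemma frob2_orthoprojr m n (P : 'M[Cc]_n) (X : 'M[Cc]_(m, n)) : orthoproj P ->
  frob X ^+ 2 = frob (X *m P) ^+ 2 + frob (X *m (1%:M - P)) ^+ 2.
Proof.
move=> oP; have [sP _] := oP; have [sP' _] := orthoprojC oP.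
rewrite -frob2_ctrmx (frob2_orthoprojl (ctrmx X) oP).
by rewrite -(frob2_ctrmx (X *m P)) -(frob2_ctrmx (X *m _)) !ctrmxM sP sP'.
Qed.

Lemma cabs_ge0 (z : Cc) : 0 <= cabs z.
Proof. by rewrite -(@ler0c Rr); exact: (normr_ge0 z). Qed.

Lemma cabsM (a b : Cc) : cabs (a * b) = cabs a * cabs b.
Proof. exact: ComplexField.Normc.normcM. Qed.

Lemma cabs_sum I (r : seq I) (F : I -> Cc) :
  cabs (\sum_(i <- r) F i) <= \sum_(i <- r) cabs (F i).
Proof. by rewrite -(@lecR Rr) rmorph_sum; exact: (ler_norm_sum r F xpredT). Qed.

Lemma ger0_cabs (a : Rr) : 0 <= a -> cabs a%:C%C = a.
Proof.
move=> a0; rewrite /cabs /ComplexField.Normc.normc /=.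
by rewrite expr0n addr0 sqrtr_sqr ger0_norm.
Qed.

Section VectorNorm.
Variable n : nat.
Implicit Types x : 'cV[Cc]_n.

Lemma vnorm_ge0 x : 0 <= vnorm x.
Proof. exact: sqrtr_ge0. Qed.

Lemma sqr_vnorm x : vnorm x ^+ 2 = \sum_i cabs (x i 0) ^+ 2.
Proof. by rewrite sqr_sqrtr // sumr_ge0 // => i _; exact: sqr_ge0. Qed.

Lemma vnorm0 : vnorm (0 : 'cV[Cc]_n) = 0.
Proof.
rewrite /vnorm big1 ?sqrtr0 // => i _.
by rewrite mxE /cabs ComplexField.Normc.normc0 expr0n.
Qed.

Lemma vnorm0_eq0 x : vnorm x = 0 -> x = 0.
Proof.
move=> x0; have : \sum_i cabs (x i 0) ^+ 2 = 0 by rewrite -sqr_vnorm x0 expr0n.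
move/psumr_eq0P => x_i0; apply/matrixP => i j; rewrite ord1 mxE.
apply: ComplexField.Normc.eq0_normc; apply/eqP.
by rewrite -sqrf_eq0 x_i0 // => k _; exact: sqr_ge0.
Qed.

Lemma vnormZ c x : vnorm (c *: x) = cabs c * vnorm x.
Proof.
rewrite /vnorm -[cabs c]ger0_norm ?cabs_ge0 // -sqrtr_sqr -sqrtrM ?sqr_ge0 //.
by rewrite mulr_sumr; congr Num.sqrt; apply: eq_bigr => i _; rewrite mxE cabsM exprMn.
Qed.

Lemma cabs_le_vnorm x i : cabs (x i 0) <= vnorm x.
Proof.
rewrite -(ler_pXn2r (n := 2)) ?nnegrE ?cabs_ge0 ?vnorm_ge0 // sqr_vnorm.
by rewrite (bigD1 i) //= lerDl sumr_ge0 // => j _; exact: sqr_ge0.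
Qed.

End VectorNorm.

Section SpectralNorm.
Variables m n : nat.
Variable M : 'M[Cc]_(m, n).

Lemma specnorm_has_sup :
  has_sup [set vnorm (M *m x) | x in [set x : 'cV[Cc]_n | vnorm x <= 1]].
Proof.
split; first by exists (vnorm (M *m 0)), 0 => //=; rewrite vnorm0.
exists (Num.sqrt (\sum_i (\sum_j cabs (M i j)) ^+ 2)) => _ [x /= x1 <-].
rewrite /vnorm ler_sqrt; last by apply: sumr_ge0 => i _; exact: sqr_ge0.
apply: ler_sum => i _; rewrite lerXn2r ?nnegrE ?cabs_ge0 //.
  by rewrite sumr_ge0 // => j _; exact: cabs_ge0.
rewrite mxE; apply: le_trans (cabs_sum _ _) _; apply: ler_sum => j _.
by rewrite cabsM ler_piMr ?cabs_ge0 // (le_trans (cabs_le_vnorm _ _)).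
Qed.

Lemma vnorm_mulmx_le (x : 'cV[Cc]_n) : vnorm (M *m x) <= specnorm M * vnorm x.
Proof.
have [x0|x_neq0] := eqVneq (vnorm x) 0.
  by rewrite (vnorm0_eq0 x0) mulmx0 !vnorm0 mulr0.
have x_gt0 : 0 < vnorm x by rewrite lt_def x_neq0 vnorm_ge0.
have inv_ge0 : 0 <= (vnorm x)^-1 by rewrite invr_ge0 ltW.
set u := (vnorm x)^-1%:C%C *: x.
have u1 : vnorm u = 1 by rewrite vnormZ ger0_cabs // mulVf.
have : vnorm (M *m u) <= specnorm M.
  by apply: sup_upper_bound; [exact: specnorm_has_sup | exists u; rewrite /= ?u1].
by rewrite /u -scalemxAr vnormZ ger0_cabs // (ler_pdivrMl _ _ x_gt0) mulrC.
Qed.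

End SpectralNorm.

Lemma frob2_col m n (X : 'M[Cc]_(m, n)) : frob X ^+ 2 = \sum_j vnorm (col j X) ^+ 2.
Proof.
rewrite sqr_sqrtr; last by do 2![apply: sumr_ge0 => ? _]; exact: sqr_ge0.
rewrite exchange_big; apply: eq_bigr => j _; rewrite sqr_vnorm.
by apply: eq_bigr => i _; rewrite mxE.
Qed.

Lemma frob2_mulmx_le m n p (M : 'M[Cc]_(m, n)) (Y : 'M[Cc]_(n, p)) :
  frob (M *m Y) ^+ 2 <= specnorm M ^+ 2 * frob Y ^+ 2.
Proof.
rewrite !frob2_col mulr_sumr; apply: ler_sum => j _.
rewrite colE -mulmxA -colE -exprMn.
have Mx_le := vnorm_mulmx_le M (col j Y).
by rewrite lerXn2r ?nnegrE ?vnorm_ge0 // (le_trans (vnorm_ge0 _) Mx_le).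
Qed.

Lemma sqr_le_mul_of_quad_ge0 (R : realFieldType) (y a w : R) : 0 <= y ->
  (forall t, 0 <= t ^+ 2 * y - 2 * t * a + w) -> a ^+ 2 <= y * w.
Proof.
move=> y_ge0 quad_ge0; have [y0|y_neq0] := eqVneq y 0.
  suff -> : a = 0 by rewrite y0 expr0n mul0r.
  apply/eqP; apply: contraT => a_neq0.
  have := quad_ge0 ((w + 1) / (2 * a)).
  have -> : 2 * ((w + 1) / (2 * a)) * a = w + 1 by field.
  rewrite y0 mulr0 sub0r; lra.
have y_gt0 : 0 < y by rewrite lt_def y_neq0.
have := quad_ge0 (a / y).
have -> : (a / y) ^+ 2 * y - 2 * (a / y) * a + w = (y * w - a ^+ 2) / y by field.
by rewrite pmulr_lge0 ?invr_gt0 // subr_ge0.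
Qed.

Lemma mxtrace_scale_sub_mul (R : comRingType) m n (c : R) (X Z : 'M[R]_(m, n))
    (X' Z' : 'M[R]_(n, m)) :
  \tr ((c *: X - Z) *m (c *: X' - Z')) =
  c ^+ 2 * \tr (X *m X') - c * (\tr (X *m Z') + \tr (Z *m X')) + \tr (Z *m Z').
Proof.
rewrite mulmxBl !mulmxBr opprB !mxtraceD !raddfN /=.
by rewrite -!scalemxAl -!scalemxAr !mxtraceZ; ring.
Qed.

Lemma frob2_realZ_sub m n (t a : Rr) (X Z : 'M[Cc]_(m, n)) :
  \tr (X *m ctrmx Z) = a%:C%C -> \tr (Z *m ctrmx X) = a%:C%C ->
  frob (t%:C%C *: X - Z) ^+ 2 = t ^+ 2 * frob X ^+ 2 - 2 * t * a + frob Z ^+ 2.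
Proof.
move=> trXZ trZX.
have real_poly (x y : Rr) : (t ^+ 2 * x - 2 * t * a + y)%:C%C =
    t%:C%C ^+ 2 * x%:C%C - 2 * t%:C%C * a%:C%C + y%:C%C.
  by rewrite rmorphD rmorphB !rmorphM rmorph_nat.
apply: (@complexI Rr); rewrite real_poly !frob2_tr ctrmxB ctrmx_realZ.
by rewrite mxtrace_scale_sub_mul trXZ trZX; ring.
Qed.

Lemma frob2_scale_sub_gram m n k (t : Rr) (M : 'M[Cc]_(m, n)) (Y : 'M[Cc]_(m, k)) :
  frob (t%:C%C *: Y - M *m (ctrmx M *m Y)) ^+ 2 =
  t ^+ 2 * frob Y ^+ 2 - 2 * t * frob (ctrmx M *m Y) ^+ 2
  + frob (M *m (ctrmx M *m Y)) ^+ 2.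
Proof.
apply: frob2_realZ_sub; rewrite frob2_tr.
  by rewrite !ctrmxM ctrmxK !mulmxA mxtrace_mulC !mulmxA.
by rewrite !ctrmxM ctrmxK !mulmxA [RHS]mxtrace_mulC !mulmxA.
Qed.

(* specnorm only controls M, so the bound for M^* goes through Cauchy-Schwarz for the
   trace inner product, obtained from the nonnegative quadratic t |-> ||t Y - M M^* Y||^2:
   ||M^* Y||^4 <= ||Y||^2 ||M M^* Y||^2 <= ||Y||^2 ||M||^2 ||M^* Y||^2. *)
Lemma frob2_ctrmx_mulmx_le m n k (M : 'M[Cc]_(m, n)) (Y : 'M[Cc]_(m, k)) :
  frob (ctrmx M *m Y) ^+ 2 <= specnorm M ^+ 2 * frob Y ^+ 2.
Proof.
have a2_le : frob (ctrmx M *m Y) ^+ 2 ^+ 2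
    <= frob Y ^+ 2 * frob (M *m (ctrmx M *m Y)) ^+ 2.
  apply: sqr_le_mul_of_quad_ge0 (sqr_ge0 _) _ => t.
  by rewrite -frob2_scale_sub_gram; exact: sqr_ge0.
have w_le := frob2_mulmx_le M (ctrmx M *m Y).
set a := frob (ctrmx M *m Y) ^+ 2 in a2_le w_le *.
set s := specnorm M ^+ 2 in w_le *.
have a_ge0 : 0 <= a := sqr_ge0 _.
have aa_le : a * a <= a * (s * frob Y ^+ 2).
  have -> : a * (s * frob Y ^+ 2) = frob Y ^+ 2 * (s * a) by ring.
  by rewrite -expr2 (le_trans a2_le) // ler_wpM2l ?sqr_ge0.
have [a0|a_neq0] := eqVneq a 0; first by rewrite a0 mulr_ge0 ?sqr_ge0.
by rewrite -(ler_pM2l (_ : 0 < a)) // lt_def a_neq0.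
Qed.

Lemma frob2_mul_gram_le m n k (M : 'M[Cc]_(m, n)) (Y : 'M[Cc]_(m, k)) :
  frob (M *m (ctrmx M *m Y)) ^+ 2 <= specnorm M ^+ 4 * frob Y ^+ 2.
Proof.
rewrite (exprM _ 2 2) -mulrA; apply: le_trans (frob2_mulmx_le _ _) _.
by rewrite ler_wpM2l ?sqr_ge0 ?frob2_ctrmx_mulmx_le.
Qed.

Lemma frob2_gram_mul_le m n k (M : 'M[Cc]_(m, n)) (Y : 'M[Cc]_(n, k)) :
  frob (ctrmx M *m (M *m Y)) ^+ 2 <= specnorm M ^+ 4 * frob Y ^+ 2.
Proof.
rewrite (exprM _ 2 2) -mulrA; apply: le_trans (frob2_ctrmx_mulmx_le _ _) _.
by rewrite ler_wpM2l ?sqr_ge0 ?frob2_mulmx_le.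
Qed.

Section PseudoInverse.
Variables (m n : nat) (A : 'M[Cc]_(m, n)) (Ad : 'M[Cc]_(n, m)).
Hypothesis pinvA : is_pinv A Ad.

Lemma pinv_orthoproj_range : orthoproj (A *m Ad).
Proof. by case: pinvA => AAdA _ sAAd _; split; rewrite // mulmxA AAdA. Qed.

Lemma pinv_orthoproj_domain : orthoproj (Ad *m A).
Proof. by case: pinvA => _ AdAAd _ sAdA; split; rewrite // mulmxA AdAAd. Qed.

Lemma pinv_mul_rangeproj : Ad *m (A *m Ad) = Ad.
Proof. by case: pinvA => _ AdAAd _ _; rewrite mulmxA. Qed.

Lemma pinv_mul_rangeprojC : Ad *m (1%:M - A *m Ad) = 0.
Proof. by rewrite mulmxBr mulmx1 pinv_mul_rangeproj subrr. Qed.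

Lemma ctrmx_mul_rangeprojC : ctrmx A *m (1%:M - A *m Ad) = 0.
Proof.
case: pinvA => AAdA _ sAAd _.
by rewrite mulmxBr mulmx1 -sAAd -ctrmxM AAdA subrr.
Qed.

Lemma domprojC_mul_pinv : (1%:M - Ad *m A) *m Ad = 0.
Proof. by case: pinvA => _ AdAAd _ _; rewrite mulmxBl mul1mx AdAAd subrr. Qed.

Lemma domprojC_mul_ctrmx : (1%:M - Ad *m A) *m ctrmx A = 0.
Proof.
case: pinvA => AAdA _ _ sAdA.
by rewrite mulmxBl mul1mx -sAdA -ctrmxM mulmxA AAdA subrr.
Qed.

Lemma ctrmx_mul_ctrmx_pinv : ctrmx A *m (ctrmx Ad *m Ad) = Ad.
Proof. by case: pinvA => _ AdAAd _ sAdA; rewrite mulmxA -ctrmxM sAdA AdAAd. Qed.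

Lemma pinv_mul_ctrmx_pinv : Ad *m (ctrmx Ad *m ctrmx A) = Ad.
Proof. by case: pinvA => _ AdAAd sAAd _; rewrite -ctrmxM sAAd mulmxA AdAAd. Qed.

End PseudoInverse.

Section PseudoInverseDifference.
Variables (m n : nat) (A B : 'M[Cc]_(m, n)) (Ad Bd : 'M[Cc]_(n, m)).
Hypotheses (pinvA : is_pinv A Ad) (pinvB : is_pinv B Bd).

Lemma pinv_sub_blockUL : Bd *m B *m (Bd - Ad) *m (A *m Ad) = - (Bd *m (B - A) *m Ad).
Proof.
have [_ BdBBd _ _] := pinvB.
rewrite mulmxBr mulmxBl BdBBd -(mulmxA _ Ad) (pinv_mul_rangeproj pinvA).
by rewrite mulmxBr mulmxBl mulmxA opprB.
Qed.

Lemma pinv_sub_blockUR : Bd *m B *m (Bd - Ad) *m (1%:M - A *m Ad) =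
  Bd *m (ctrmx Bd *m (ctrmx (B - A) *m (1%:M - A *m Ad))).
Proof.
have [_ BdBBd _ _] := pinvB.
rewrite (mulmxBr (Bd *m B)) mulmxBl BdBBd -(mulmxA _ Ad) (pinv_mul_rangeprojC pinvA).
rewrite mulmx0 subr0 ctrmxB mulmxBl (ctrmx_mul_rangeprojC pinvA) subr0.
by rewrite !mulmxA -(mulmxA Bd) (pinv_mul_ctrmx_pinv pinvB).
Qed.

Lemma pinv_sub_blockDL : (1%:M - Bd *m B) *m (Bd - Ad) *m (A *m Ad) =
  ctrmx (ctrmx Ad *m (Ad *m ((B - A) *m (1%:M - Bd *m B)))).
Proof.
have [sQ' _] := orthoprojC (pinv_orthoproj_domain pinvB).
rewrite mulmxBr (domprojC_mul_pinv pinvB) sub0r mulNmx -mulmxA (pinv_mul_rangeproj pinvA).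
rewrite !ctrmxM ctrmxK sQ' ctrmxB mulmxBr (domprojC_mul_ctrmx pinvB) sub0r !mulNmx.
by rewrite -!mulmxA (ctrmx_mul_ctrmx_pinv pinvA).
Qed.

Lemma pinv_sub_blockDR : (1%:M - Bd *m B) *m (Bd - Ad) *m (1%:M - A *m Ad) = 0.
Proof.
rewrite (mulmxBr (1%:M - _)) (domprojC_mul_pinv pinvB) sub0r mulNmx -mulmxA.
by rewrite (pinv_mul_rangeprojC pinvA) mulmx0 oppr0.
Qed.

Lemma frob2_pinv_sub :
  frob (Bd - Ad) ^+ 2 = frob (Bd *m (B - A) *m Ad) ^+ 2
    + frob (Bd *m (ctrmx Bd *m (ctrmx (B - A) *m (1%:M - A *m Ad)))) ^+ 2
    + frob (ctrmx Ad *m (Ad *m ((B - A) *m (1%:M - Bd *m B)))) ^+ 2.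
Proof.
have oP := pinv_orthoproj_range pinvA.
apply: etrans (frob2_orthoprojl _ (pinv_orthoproj_domain pinvB)) _; congr (_ + _).
  apply: etrans (frob2_orthoprojr _ oP) _.
  by rewrite pinv_sub_blockUL pinv_sub_blockUR frobN.
apply: etrans (frob2_orthoprojr _ oP) _.
by rewrite pinv_sub_blockDL pinv_sub_blockDR frob0 expr0n addr0 frob2_ctrmx.
Qed.

Lemma frob2_pinv_sub_le :
  frob (Bd - Ad) ^+ 2 <=
    specnorm Ad ^+ 4 * (frob (B - A) ^+ 2 - frob ((B - A) *m Bd *m B) ^+ 2)
    + specnorm Bd ^+ 4 * (frob (B - A) ^+ 2 - frob (A *m Ad *m (B - A)) ^+ 2)
    + frob (Bd *m (B - A) *m Ad) ^+ 2.
Proof.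
have oP := pinv_orthoproj_range pinvA; have [sP' _] := orthoprojC oP.
have oQ := pinv_orthoproj_domain pinvB.
rewrite frob2_pinv_sub -addrA addrC lerD2r addrC; apply: lerD.
  have -> : frob (B - A) ^+ 2 - frob ((B - A) *m Bd *m B) ^+ 2
      = frob ((B - A) *m (1%:M - Bd *m B)) ^+ 2.
    by rewrite (frob2_orthoprojr (B - A) oQ) mulmxA addrC addKr.
  exact: frob2_gram_mul_le.
have -> : frob (B - A) ^+ 2 - frob (A *m Ad *m (B - A)) ^+ 2
    = frob (ctrmx (B - A) *m (1%:M - A *m Ad)) ^+ 2.
  rewrite -(frob2_ctrmx (ctrmx _ *m _)) ctrmxM ctrmxK sP'.
  by rewrite (frob2_orthoprojl (B - A) oP) addrC addKr.
exact: frob2_mul_gram_le.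
Qed.

End PseudoInverseDifference.

Unset Implicit Arguments.

Theorem corollary3p3 (m n r s : nat) (A B : 'M[Cc]_(m, n)) (Ad Bd : 'M[Cc]_(n, m)) :
  \rank A = r -> \rank B = s ->
  is_pinv A Ad -> is_pinv B Bd ->
  let E := B - A in
  let beta1 : Rr :=
    specnorm Ad ^+ 4 * (frob E ^+ 2 - frob (E *m Bd *m B) ^+ 2)
    + specnorm Bd ^+ 4 * (frob E ^+ 2 - frob (A *m Ad *m E) ^+ 2) in
  let beta2 : Rr :=
    specnorm Ad ^+ 4 * (frob E ^+ 2 - frob (B *m Bd *m E) ^+ 2)
    + specnorm Bd ^+ 4 * (frob E ^+ 2 - frob (E *m Ad *m A) ^+ 2) in
  frob (Bd - Ad) ^+ 2 <=
    Num.min (beta1 + frob (Bd *m E *m Ad) ^+ 2) (beta2 + frob (Ad *m E *m Bd) ^+ 2).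
Proof.
move=> _ _ pinvA pinvB /=.
rewrite le_min (frob2_pinv_sub_le pinvA pinvB) /=.
have := frob2_pinv_sub_le pinvB pinvA.
rewrite -[Ad - Bd]opprB -[A - B]opprB !mulmxN !mulNmx !frobN.
by rewrite [specnorm Bd ^+ 4 * _ + _]addrC.
Qed.
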